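(* Let $\Delta\ge 4$ be an integer and for positive integers $i,j$ define \[ F(i,j)=(4\Delta-6)\Bigl(\frac{1}{i}+\frac{1}{j}\Bigr)+\Delta^2-6\Delta+3+\frac{6}{\Delta}-(i-j)^2 . \] Then for every integer $i$ with $3\le i\le \left\lfloor \frac{\Delta+3}{2}\right\rfloor$ we have the strict inequality \[ (\Delta-1)\,F(i,\Delta) > F(\Delta,\Delta). \] *)

From mathcomp Require Import all_boot all_order all_algebra.
Set Implicit Arguments. Unset Strict Implicit. Unset Printing Implicit Defensive.
Import Order.TTheory GRing.Theory Num.Theory.
Local Open Scope ring_scope.

Definition F (D i j : nat) : rat :=
  (4 * D%:R - 6) * ((i%:R)^-1 + (j%:R)^-1) + D%:R ^+ 2 - 6 * D%:R + 3
  + 6 / D%:R - (i%:R - j%:R) ^+ 2.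

(* Since [1/D] cancels, [F(i,D) = (4D-6)/i + D^2 - 6D + 7 - (i-D)^2] and
   [F(D,D) = D^2 - 6D + 11 - 6/D].  On [3 <= i <= (D+3)/2] the function
   [i |-> (4D-6)/i - (i-D)^2] is smallest at [i = 3], where [F(3,D) = (4D-12)/3];
   and [(D-1)(4D-12)/3 > F(D,D)] reduces to [D^2 + 2D - 21 + 18/D > 0]. *)
From mathcomp Require Import all_boot all_order all_algebra.
From mathcomp Require Import ring lra.
Set Implicit Arguments. Unset Strict Implicit. Unset Printing Implicit Defensive.
Import Order.TTheory GRing.Theory Num.Theory.
Local Open Scope ring_scope.

Lemma offdiag_ge_at3 (R : realFieldType) (y x : R) :
  4 <= y -> 3 <= x -> 2 * x <= y + 3 ->
  (4 * y - 6) / 3 - (3 - y) ^+ 2 <= (4 * y - 6) / x - (x - y) ^+ 2.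
Proof.
move=> y_ge4 x_ge3 x_le; have x_gt0 : 0 < x by lra.
have cofactor_ge : 4 * y - 6 <= 3 * x * (2 * y - 3 - x).
  have P_ge0 : 0 <= (x - 3) * (2 * y - 3 - x) by apply: mulr_ge0; lra.
  have -> : 3 * x * (2 * y - 3 - x) = 3 * ((x - 3) * (2 * y - 3 - x)) + 9 * (2 * y - 3 - x)
    by ring.
  move: P_ge0; set P := (x - 3) * _; lra.
have -> : (4 * y - 6) / x = ((4 * y - 6) / 3) * (3 / x) by field; lra.
rewrite -subr_ge0.
have -> : (4 * y - 6) / 3 * (3 / x) - (x - y) ^+ 2 - ((4 * y - 6) / 3 - (3 - y) ^+ 2)
    = (x - 3) / (3 * x) * (3 * x * (2 * y - 3 - x) - (4 * y - 6)) by field; lra.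
apply: mulr_ge0; last lra.
by apply: divr_ge0; lra.
Qed.

Lemma diag_lt_scaled_at3 (R : realFieldType) (y : R) : 4 <= y ->
  y ^+ 2 - 6 * y + 11 - 6 / y
    < (y - 1) * ((4 * y - 6) / 3 + y ^+ 2 - 6 * y + 7 - (3 - y) ^+ 2).
Proof.
move=> y_ge4; have inv_gt0 : 0 < 6 / y by apply: divr_gt0; lra.
have -> : (4 * y - 6) / 3 + y ^+ 2 - 6 * y + 7 - (3 - y) ^+ 2 = (4 * y - 12) / 3
  by field.
nra.
Qed.

Lemma F_at_D (D i : nat) : (0 < i)%N -> (0 < D)%N ->
  F D i D = (4 * D%:R - 6) / i%:R + D%:R ^+ 2 - 6 * D%:R + 7 - (i%:R - D%:R) ^+ 2.
Proof.
move=> i_gt0 D_gt0; rewrite /F; field.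
by rewrite !pnatr_eq0 -!lt0n i_gt0 D_gt0.
Qed.

Lemma F_diag (D : nat) : (0 < D)%N -> F D D D = D%:R ^+ 2 - 6 * D%:R + 11 - 6 / D%:R.
Proof. by move=> D_gt0; rewrite /F; field; rewrite pnatr_eq0 -lt0n. Qed.

Theorem lemma4p3 (D i : nat) (hD : (4 <= D)%N) (hi3 : (3 <= i)%N)
  (hi : (i <= (D + 3)./2)%N) :
  (D%:R - 1) * F D i D > F D D D.
Proof.
have i2_le : (2 * i <= D + 3)%N by rewrite mul2n -geq_half_double.
have x_ge3 : (3 : rat) <= i%:R by rewrite (ler_nat rat 3).
have y_ge4 : (4 : rat) <= D%:R by rewrite (ler_nat rat 4).
have x2_le : 2 * (i%:R : rat) <= D%:R + 3.
  by rewrite -(natrD rat D 3) -(natrM rat 2 i) ler_nat.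
rewrite F_diag ?F_at_D ?(leq_trans _ hD) ?(leq_trans _ hi3) //.
apply: (lt_le_trans (diag_lt_scaled_at3 y_ge4)).
apply: ler_wpM2l; first lra.
have := offdiag_ge_at3 y_ge4 x_ge3 x2_le.
lra.
Qed.
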